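(* In the noiseless case ($\alpha=0$), run GD with learning rate $\eta=1$ from $\mathbf{W}_0=\mathbf{0}$. Then for sufficiently large training time $t\gtrsim1$, the sub-task loss satisfies $\mathcal{L}_j^{\mathrm{GD}}(t)\eqsim 1/(p_j t)$ for every $j\in[K]$, and consequently the total loss satisfies $\mathcal{L}^{\mathrm{GD}}(t)\eqsim K/t$.
   Context: Setup: $K=MC$ knowledge items split into $M$ groups of $C$ items, group $i$ being indices $(i-1)C+1,\dots,iC$. Frequencies: $\widetilde p_1>\dots>\widetilde p_M>0$ with $\sum_i\widetilde p_i=1$ and $p_j=\widetilde p_i/C$ for $j$ in group $i$. $\mathbf{E}=(\mathbf{E}_1,\dots,\mathbf{E}_K)$, $\widetilde{\mathbf{E}}=(\widetilde{\mathbf{E}}_1,\dots,\widetilde{\mathbf{E}}_K)$ are $K\times K$ matrices with orthonormal columns. Noise level $\alpha\in[0,1)$: $p_{i\mid j}=1-\alpha+\alpha/K$ if $i=j$, $\alpha/K$ otherwise. $\widehat p_{i\mid j}(\mathbf{W})=\exp(\widetilde{\mathbf{E}}_i^\top\mathbf{W}\mathbf{E}_j)/\sum_k\exp(\widetilde{\mathbf{E}}_k^\top\mathbf{W}\mathbf{E}_j)$. Sub-task loss $\mathcal{L}_j(\mathbf{W})=-\sum_i p_{i\mid j}\log\widehat p_{i\mid j}(\mathbf{W})$, total loss $\mathcal{L}(\mathbf{W})=\sum_j p_j\mathcal{L}_j(\mathbf{W})$. GD: $\mathbf{W}_{t+1}=\mathbf{W}_t-\eta\nabla\mathcal{L}(\mathbf{W}_t)$;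 $\mathcal{L}^{\mathrm{GD}}_j(t)=\mathcal{L}_j(\mathbf{W}_t)$, $\mathcal{L}^{\mathrm{GD}}(t)=\mathcal{L}(\mathbf{W}_t)$. Regime: $K\gg1$ and $M\ll C$. Notation $\eqsim$ / $\lesssim$ / $\gtrsim$ means equality / inequality up to constant factors.
   Formalization: The bounds hold for all t beyond a threshold that may depend on M, C, the frequencies $\widetilde p_i$ and E, Ẽ, rather than for t ≳ 1; the constants in ≂ are universal. Apart from conventions, each condition added here is assumed in the paper as well or is needed for the statement above to hold. *)

From HB Require Import structures.
From mathcomp Require Import all_boot all_order all_algebra.
From mathcomp Require Import all_classical all_reals all_analysis.
Set Implicit Arguments. Unset Strict Implicit. Unset Printing Implicit Defensive.
Import Order.TTheory GRing.Theory Num.Theory.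
Local Open Scope ring_scope.

Lemma group_lt (M C : nat) (j : 'I_(M * C)) : (j %/ C < M)%N.
Proof.
case: C j => [|C] j; first by case: j => /= k; rewrite muln0.
by rewrite ltn_divLR // ltn_ord.
Qed.

Definition group (M C : nat) (j : 'I_(M * C)) : 'I_M := Ordinal (group_lt j).

Section Model.
Variable R : realType.

Definition freq (M C : nat) (ptil : 'I_M -> R) (j : 'I_(M * C)) : R :=
  ptil (group j) / C%:R.

Definition cond_p (K : nat) (alpha : R) (i j : 'I_K) : R :=
  if i == j then 1 - alpha + alpha / K%:R else alpha / K%:R.

Definition logits (K : nat) (E Et W : 'M[R]_K) : 'M[R]_K := Et^T *m W *m E.

Definition phat (K : nat) (E Et W : 'M[R]_K) (i j : 'I_K) : R :=
  expR (logits E Et W i j) / \sum_(k < K) expR (logits E Et W k j).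

Definition subloss (K : nat) (alpha : R) (E Et W : 'M[R]_K) (j : 'I_K) : R :=
  - \sum_(i < K) cond_p alpha i j * ln (phat E Et W i j).

Definition totloss (K : nat) (p : 'I_K -> R) (alpha : R) (E Et W : 'M[R]_K) : R :=
  \sum_(j < K) p j * subloss alpha E Et W j.

Definition grad (K : nat) (f : 'M[R]_K -> R) (W : 'M[R]_K) : 'M[R]_K :=
  \matrix_(a < K, b < K) derive1 (fun s : R => f (W + s *: delta_mx a b)) 0.

Fixpoint gd (K : nat) (f : 'M[R]_K -> R) (eta : R) (W0 : 'M[R]_K) (t : nat)
  : 'M[R]_K :=
  match t with
  | 0 => W0
  | t'.+1 => gd f eta W0 t' - eta *: grad f (gd f eta W0 t')
  end.

End Model.

From HB Require Import structures.
From mathcomp Require Import all_boot all_order all_algebra.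
From mathcomp Require Import all_classical all_reals all_analysis.
From mathcomp Require Import ring lra zify.
Import Order.TTheory GRing.Theory Num.Theory.
Local Open Scope ring_scope.

(* With orthonormal embeddings, a gradient step on W moves the logits
   Z = Et^T W E by exactly the gradient of the loss in logit space, so GD from
   W = 0 acts on each column of Z separately.  In column j all off-diagonal
   logits stay equal, hence the column is described by the single margin
   v_t = exp (Z_jj - Z_kj) / (K - 1), for which the sub-task loss is
   ln (1 + 1 / v_t) and
     v_(t+1) = v_t * exp (b / (1 + v_t)),   b = p_j K / (K - 1) in [p_j, 2 p_j].
   After about K / p_j steps v_t >= 1, from then on it grows by at least p_j / 2
   and at most 2 e^2 p_j per step, so v_t is of order p_j t and the sub-task
   loss of order 1 / (p_j t).  Weighting by p_j and summing over the K
   sub-tasks gives K / t for the total loss. *)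

Lemma ord_neq_gt1 {n} {j k : 'I_n} : k != j -> (1 < n)%N.
Proof. by have := ltn_ord k; have := ltn_ord j; rewrite -val_eqE /=; lia. Qed.

Lemma exists_ord_neq {n} (j : 'I_n) : (1 < n)%N -> exists k : 'I_n, k != j.
Proof.
move=> n_gt1; pose o0 : 'I_n := Ordinal (ltnW n_gt1); pose o1 : 'I_n := Ordinal n_gt1.
have [->|j_neq_o0] := eqVneq j o0; last by exists o0; rewrite eq_sym.
by exists o1.
Qed.

Lemma sum_mul_div_mul {F : fieldType} {n} {w : 'I_n -> F} (c : F) {x : F} :
  (forall j, w j != 0) -> x != 0 ->
  \sum_(j < n) w j * (c / (w j * x)) = c * n%:R / x.
Proof.
move=> w_neq0 x_neq0; rewrite (eq_bigr (fun _ => c / x)) => [|j _]; last first.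
  by field; rewrite x_neq0 w_neq0.
by rewrite sumr_const card_ord -[LHS]mulr_natr mulrAC.
Qed.

Section ElementaryBounds.
Context {R : realType}.

Lemma expR_le1DxexpR (x : R) : expR x <= 1 + x * expR x.
Proof.
have ex_gt0 := expR_gt0 x.
have := expR_ge1Dx (- x); rewrite -(ler_pM2r ex_gt0) -expRD addNr expR0.
by rewrite mulrDl mul1r mulNr lerBlDr addrC.
Qed.

Lemma ln1DV_ge {x : R} : 0 < x -> (1 + x)^-1 <= ln (1 + x^-1).
Proof.
move=> x_gt0; have y_gt0 : 0 < 1 + x^-1 by rewrite addr_gt0 ?invr_gt0.
have : - 1 < - (1 + x)^-1 by rewrite ltrN2 invf_lt1 ?ltrDl //; lra.
move/le_ln1Dx; have -> : 1 + - (1 + x)^-1 = (1 + x^-1)^-1.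
  by field; rewrite !gt_eqF //; lra.
by rewrite lnV ?posrE // lerN2.
Qed.

End ElementaryBounds.

Section LogSumExpDerivative.
Context {R : realType}.

Lemma is_derive_affine (x z c : R) : is_derive x 1 (fun s => z + s * c) c.
Proof.
have := is_deriveD (is_derive_cst z x 1) (is_deriveZ c (is_derive_id x 1)).
rewrite add0r /GRing.scale /= mulr1.
by congr is_derive; apply/funext => s /=; rewrite mulrC.
Qed.

Lemma is_derive_sum_fun {n} {h : 'I_n -> R -> R} {x : R} {dh : 'I_n -> R} :
  (forall i, is_derive x 1 (h i) (dh i)) ->
  is_derive x 1 (fun s => \sum_(i < n) h i s) (\sum_(i < n) dh i).
Proof. by move=> hd; have := is_derive_sum hd; rewrite fct_sumE. Qed.

Lemma is_derive0_ln_sum_expR n (z c : 'I_n -> R) :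
  0 < \sum_(k < n) expR (z k) ->
  is_derive (0 : R) 1 (fun s => ln (\sum_(k < n) expR (z k + s * c k)))
    ((\sum_(k < n) expR (z k) * c k) / \sum_(k < n) expR (z k)).
Proof.
have dexp k : is_derive (0 : R) 1 (fun s => expR (z k + s * c k)) (expR (z k) * c k).
  have := is_derive1_comp (is_derive_expR _) (is_derive_affine 0 (z k) (c k)).
  by rewrite /= mul0r addr0.
have -> : \sum_(k < n) expR (z k) = \sum_(k < n) expR (z k + 0 * c k).
  by apply: eq_bigr => k _; rewrite mul0r addr0.
move=> S_gt0.
by have := is_derive1_comp (is_derive1_ln S_gt0) (is_derive_sum_fun dexp); rewrite mulrC.
Qed.

End LogSumExpDerivative.

Section NoiselessGradient.
Context {R : realType} {K : nat}.
Implicit Types (E Et W Z : 'M[R]_K) (p : 'I_K -> R).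

Definition expsum Z (j : 'I_K) : R := \sum_(k < K) expR (Z k j).

Lemma expsum_gt0 Z j : 0 < expsum Z j.
Proof.
rewrite /expsum (bigD1 j) //=; apply: ltr_pwDl; first exact: expR_gt0.
by apply: sumr_ge0 => i _; exact: expR_ge0.
Qed.

Lemma subloss0E E Et W j :
  subloss 0 E Et W j = ln (expsum (logits E Et W) j) - logits E Et W j j.
Proof.
rewrite /subloss (bigD1 j) //= big1 ?addr0; last first.
  by move=> i ij; rewrite /cond_p (negbTE ij) !mul0r.
rewrite /cond_p eqxx mul0r subr0 addr0 mul1r /phat.
by rewrite ln_div ?posrE ?expR_gt0 ?expsum_gt0 // expRK opprB.
Qed.

Lemma logitsD_delta E Et W a b (s : R) :
  logits E Et (W + s *: delta_mx a b) =
  logits E Et W + s *: \matrix_(k, j) (Et a k * E b j).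
Proof.
rewrite /logits mulmxDr mulmxDl -scalemxAr -scalemxAl; congr (_ + _ *: _).
apply/matrixP => k j; rewrite !mxE (bigD1 b) //= big1 ?addr0; last first.
  by move=> l lb; rewrite !mxE big1 ?mul0r // => m _; rewrite !mxE (negbTE lb) andbF mulr0.
rewrite !mxE (bigD1 a) //= big1 ?addr0; last first.
  by move=> m ma; rewrite !mxE (negbTE ma) mulr0.
by rewrite !mxE !eqxx mulr1.
Qed.

Definition logit_grad p Z : 'M[R]_K :=
  \matrix_(k, j) (p j * (expR (Z k j) / expsum Z j - (k == j)%:R)).

Lemma grad_totloss0 p E Et W :
  grad (totloss p 0 E Et) W = Et *m logit_grad p (logits E Et W) *m E^T.
Proof.
apply/matrixP => a b; rewrite mxE derive1E.
set Z := logits E Et W; set c := \matrix_(k, j) (Et a k * E b j).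
pose lse j s := ln (\sum_(k < K) expR (Z k j + s * c k j)).
have -> : (fun s => totloss p 0 E Et (W + s *: delta_mx a b)) =
    (fun s => \sum_(j < K) p j * (lse j s - (Z j j + s * c j j))).
  apply/funext => s; apply: eq_bigr => j _.
  rewrite subloss0E logitsD_delta /lse /expsum !mxE; congr (_ * (ln _ - _)).
  by apply: eq_bigr => k _; rewrite !mxE.
clearbody Z.
have dlse j : is_derive (0 : R) 1 (lse j) ((\sum_k expR (Z k j) * c k j) / expsum Z j).
  exact: is_derive0_ln_sum_expR (expsum_gt0 Z j).
have dterm j := is_deriveZ (p j) (is_deriveB (dlse j) (is_derive_affine 0 (Z j j) (c j j))).
rewrite (@derive_val _ _ _ _ _ _ _ (is_derive_sum_fun dterm)) !mxE; apply: eq_bigr => j _.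
have S_neq0 := lt0r_neq0 (expsum_gt0 Z j).
have delta : \sum_k Et a k * (k == j)%:R = Et a j.
  rewrite (bigD1 j) //= eqxx mulr1 big1 ?addr0 // => k /negbTE->.
  by rewrite mulr0.
have softmax : \sum_k expR (Z k j) * c k j =
    E b j * expsum Z j * \sum_k Et a k * (expR (Z k j) / expsum Z j).
  by rewrite mulr_sumr; apply: eq_bigr => k _; rewrite mxE; field.
rewrite softmax [_ a j]mxE [_ j b]mxE /c /logit_grad /GRing.scale /= mxE.
under [in RHS]eq_bigr => k _ do rewrite mxE mulrCA mulrBr.
by rewrite -mulr_sumr sumrB delta; field.
Qed.
End NoiselessGradient.

Definition gd_logits {R : realType} {K : nat} (p : 'I_K -> R) (E Et : 'M[R]_K)
  (t : nat) : 'M[R]_K := logits E Et (gd (totloss p 0 E Et) 1 0 t).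

Definition gd_margin {R : realType} {K : nat} (p : 'I_K -> R) (E Et : 'M[R]_K)
  (j k : 'I_K) (t : nat) : R :=
  expR (gd_logits p E Et t j j - gd_logits p E Et t k j) / (K%:R - 1).

Section NoiselessDynamics.
Context {R : realType} {K : nat} (p : 'I_K -> R) {E Et : 'M[R]_K}.
Local Notation gd_logits := (gd_logits p E Et).
Local Notation gd_margin := (gd_margin p E Et).

Lemma gd_logits0 : gd_logits 0 = 0.
Proof. by rewrite /gd_logits /logits mulmx0 mul0mx. Qed.

Hypotheses (E_orth : E^T *m E = 1%:M) (Et_orth : Et^T *m Et = 1%:M).

Lemma gd_logitsS t : gd_logits t.+1 = gd_logits t - logit_grad p (gd_logits t).
Proof.
rewrite /gd_logits /= scale1r grad_totloss0 {1}/logits mulmxBr mulmxBl.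
congr (_ - _).
by rewrite !mulmxA Et_orth mul1mx -mulmxA E_orth mulmx1.
Qed.

Lemma gd_logitsSE t a b :
  gd_logits t.+1 a b = gd_logits t a b -
    p b * (expR (gd_logits t a b) / expsum (gd_logits t) b - (a == b)%:R).
Proof.
by rewrite gd_logitsS; set Z := gd_logits t; clearbody Z; rewrite !mxE.
Qed.

Lemma gd_logits_offdiag t a a' b :
  a != b -> a' != b -> gd_logits t a b = gd_logits t a' b.
Proof.
move=> /negbTE a_neq_b /negbTE a'_neq_b.
elim: t => [|t IH]; first by rewrite gd_logits0 !mxE.
by rewrite !gd_logitsSE a_neq_b a'_neq_b IH.
Qed.

Context {j k : 'I_K}.
Hypothesis k_neq_j : k != j.

Let K1_gt0 : 0 < K%:R - 1 :> R.
Proof. by rewrite subr_gt0 ltr1n (ord_neq_gt1 k_neq_j). Qed.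

Lemma expsum_gd_logits t :
  expsum (gd_logits t) j =
  expR (gd_logits t j j) + (K%:R - 1) * expR (gd_logits t k j).
Proof.
rewrite /expsum (bigD1 j) //=; congr (_ + _).
rewrite (eq_bigr (fun _ => expR (gd_logits t k j))) => [|l l_neq_j]; last first.
  by rewrite (gd_logits_offdiag _ _ _ _ l_neq_j k_neq_j).
rewrite sumr_const cardC1 card_ord -[LHS]mulr_natr mulrC -subn1 natrB //.
exact: ltnW (ord_neq_gt1 k_neq_j).
Qed.

Lemma gd_margin0 : gd_margin j k 0 = (K%:R - 1)^-1.
Proof. by rewrite /gd_margin gd_logits0 !mxE subrr expR0 div1r. Qed.

Lemma gd_marginS t :
  gd_margin j k t.+1 =
  gd_margin j k t * expR (p j * K%:R / (K%:R - 1) / (1 + gd_margin j k t)).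
Proof.
rewrite /gd_margin -mulrAC -expRD; congr (expR _ / _).
rewrite !gd_logitsSE eqxx (negbTE k_neq_j) expsum_gd_logits expRB.
have := expR_gt0 (gd_logits t j j); have := expR_gt0 (gd_logits t k j).
set a := expR (gd_logits t j j); set c := expR (gd_logits t k j) => c_gt0 a_gt0.
have S_gt0 : 0 < c * (K%:R - 1) + a by rewrite addr_gt0 // mulr_gt0.
by rewrite /= mulr1n mulr0n; field; rewrite !gt_eqF.
Qed.

Lemma subloss_gd_margin t :
  subloss 0 E Et (gd (totloss p 0 E Et) 1 0 t) j = ln (1 + (gd_margin j k t)^-1).
Proof.
rewrite subloss0E -/(gd_logits t) expsum_gd_logits /gd_margin expRB.
have := expR_gt0 (gd_logits t j j); have := expR_gt0 (gd_logits t k j).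
rewrite -{3}(expRK (gd_logits t j j)).
set a := expR (gd_logits t j j); set c := expR (gd_logits t k j) => c_gt0 a_gt0.
have S_gt0 : 0 < a + (K%:R - 1) * c by rewrite addr_gt0 // mulr_gt0.
by rewrite -ln_div ?posrE //; congr ln; field; rewrite !gt_eqF.
Qed.

End NoiselessDynamics.

Section MarginRecurrence.
Context {R : realType}.
Variables (k p : R) (v : nat -> R).
Hypotheses (k_ge2 : 2 <= k) (p_gt0 : 0 < p) (p_le1 : p <= 1).
Hypothesis v0 : v 0 = (k - 1)^-1.
Hypothesis vS : forall t, v t.+1 = v t * expR (p * k / (k - 1) / (1 + v t)).

Let k1_gt0 : 0 < k - 1. Proof. by have := k_ge2; lra. Qed.

Let rate_ge : p <= p * k / (k - 1).
Proof. by rewrite ler_pdivlMr //; have := p_gt0; nra. Qed.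

Let rate_le : p * k / (k - 1) <= 2 * p.
Proof. by rewrite ler_pdivrMr //; have := p_gt0; have := k_ge2; nra. Qed.

Lemma margin_gt0 t : 0 < v t.
Proof.
elim: t => [|t IH]; first by rewrite v0 invr_gt0.
by rewrite vS mulr_gt0 ?expR_gt0.
Qed.

Lemma margin_step_lb t : v t + p * (v t / (1 + v t)) <= v t.+1.
Proof.
have vt_gt0 := margin_gt0 t; have v1_gt0 : 0 < 1 + v t by lra.
rewrite vS; apply: le_trans (ler_wpM2l (ltW vt_gt0) (expR_ge1Dx _)).
by rewrite mulrDr mulr1 lerD2l [leRHS]mulrCA ler_pM2r ?divr_gt0.
Qed.

Lemma margin_step_ub t : v t.+1 <= v t + 2 * expR 2 * p.
Proof.
have vt_gt0 := margin_gt0 t; have v1_gt0 : 0 < 1 + v t by lra.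
set x := p * k / (k - 1) / (1 + v t).
have rate_gt0 : 0 < p * k / (k - 1) := lt_le_trans p_gt0 rate_ge.
have x_ge0 : 0 <= x by rewrite divr_ge0 ?ltW.
have x_le : x <= 2.
  apply: le_trans (le_trans rate_le _); last by have := p_le1; lra.
  by rewrite ler_pdivrMr //; nra.
have vx_le : v t * x <= 2 * p.
  apply: le_trans rate_le; rewrite /x mulrCA ger_pMr //.
  by rewrite ler_pdivrMr // mul1r lerDr.
have ex_le : expR x <= 1 + x * expR 2.
  apply: le_trans (expR_le1DxexpR x) _.
  by rewrite lerD2l ler_wpM2l // ler_expR.
rewrite vS -/x; have := expR_gt0 (2 : R); nra.
Qed.

Lemma margin_lb_linear t n :
  v t + n%:R * (p * (v t / (1 + v t))) <= v (t + n).
Proof.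
have vt_gt0 := margin_gt0 t; have v1_gt0 : 0 < 1 + v t by lra.
have incr_ge0 : 0 <= p * (v t / (1 + v t)) by rewrite mulr_ge0 ?divr_ge0 ?ltW.
elim: n => [|n IH]; first by rewrite mul0r addr0 addn0.
rewrite addnS; apply: le_trans (margin_step_lb _).
have vtn_ge : v t <= v (t + n).
  by apply: le_trans IH; rewrite lerDl mulr_ge0.
have vtn_gt0 := margin_gt0 (t + n).
have frac_le : v t / (1 + v t) <= v (t + n) / (1 + v (t + n)).
  have vtn1_gt0 : 0 < 1 + v (t + n) by lra.
  rewrite ler_pdivrMr // mulrAC ler_pdivlMr // !mulrDr !mulr1 [v (t + n) * _]mulrC.
  by rewrite lerD2r.
have := ler_wpM2l (ltW p_gt0) frac_le.
by rewrite -addn1 natrD mulrDl mul1r; lra.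
Qed.

Lemma margin_ub t : v t <= 1 + t%:R * (2 * expR 2 * p).
Proof.
elim: t => [|t IH]; first by rewrite v0 mul0r addr0 invf_le1; have := k_ge2; lra.
have := margin_step_ub t.
by rewrite -addn1 natrD mulrDl mul1r; lra.
Qed.

Definition margin_warmup : nat := (Num.truncn (k / p)).+1.

Lemma margin_warmup_gt : k < margin_warmup%:R * p.
Proof. by rewrite -ltr_pdivrMr //; exact: truncnS_gt. Qed.

Lemma margin_warmup_ge1 : 1 <= v margin_warmup.
Proof.
have := margin_lb_linear 0 margin_warmup; rewrite add0n v0.
have -> : (k - 1)^-1 / (1 + (k - 1)^-1) = k^-1.
  by field; rewrite !gt_eqF //; have := k_ge2; lra.
have : 1 <= margin_warmup%:R * (p * k^-1).
  rewrite mulrA ler_pdivlMr; have := margin_warmup_gt; have := k_ge2; lra.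
have : 0 <= (k - 1)^-1 by rewrite invr_ge0 ltW.
lra.
Qed.

Lemma margin_late_lb t : (2 * margin_warmup <= t)%N -> p * t%:R / 4 <= v t.
Proof.
move=> ht; set T := margin_warmup.
have := margin_lb_linear T (t - T); rewrite subnKC; last by lia.
have vT_ge1 : 1 <= v T := margin_warmup_ge1.
have half_le : 2^-1 <= v T / (1 + v T) by rewrite ler_pdivlMr; lra.
have n_ge : t%:R <= 2 * (t - T)%:R :> R by rewrite -natrM ler_nat; lia.
have n_ge0 : 0 <= (t - T)%:R :> R by [].
have := ler_wpM2l n_ge0 (ler_wpM2l (ltW p_gt0) half_le).
have := p_gt0; nra.
Qed.

Lemma ln1DV_margin_bounds t : (2 * margin_warmup <= t)%N ->
  (1 + 2 * expR 2)^-1 / (p * t%:R) <= ln (1 + (v t)^-1) <= 4 / (p * t%:R).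
Proof.
move=> ht; have vt_gt0 := margin_gt0 t.
have pt_ge4 : 4 <= p * t%:R.
  have : (2 * margin_warmup)%:R <= t%:R :> R by rewrite ler_nat.
  rewrite natrM; have := margin_warmup_gt; have := k_ge2; have := p_gt0; nra.
apply/andP; split.
  apply: le_trans _ (ln1DV_ge vt_gt0); rewrite -invfM lef_pV2 ?posrE; last 2 first.
  - by rewrite mulr_gt0 //; first (have := expR_gt0 (2 : R)); lra.
  - by have := vt_gt0; lra.
  have := margin_ub t; have := expR_gt0 (2 : R); nra.
have vinv_gt : -1 < (v t)^-1 by have := vt_gt0; rewrite -invr_gt0; lra.
apply: le_trans (le_ln1Dx vinv_gt) _.
rewrite -[4 / _]invf_div lef_pV2 ?posrE ?margin_late_lb // divr_gt0 //; lra.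
Qed.

End MarginRecurrence.

Lemma subloss_gd_bounds {R : realType} {K : nat} (p : 'I_K -> R) {E Et : 'M[R]_K}
    (j : 'I_K) t :
  (1 < K)%N -> E^T *m E = 1%:M -> Et^T *m Et = 1%:M -> 0 < p j -> p j <= 1 ->
  (2 * margin_warmup K%:R (p j) <= t)%N ->
  (1 + 2 * expR 2)^-1 / (p j * t%:R) <= subloss 0 E Et (gd (totloss p 0 E Et) 1 0 t) j
    <= 4 / (p j * t%:R).
Proof.
move=> K_gt1 E_orth Et_orth pj_gt0 pj_le1 ht.
have [k k_neq_j] := exists_ord_neq j K_gt1.
rewrite (subloss_gd_margin p E_orth Et_orth k_neq_j).
apply: (@ln1DV_margin_bounds _ K%:R) => //; first by rewrite ler_nat.
- exact: gd_margin0.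
- exact: gd_marginS.
Qed.

Lemma freq_gt0_le1 {R : realType} {M C : nat} {ptil : 'I_M -> R} (j : 'I_(M * C)) :
  (forall i, 0 < ptil i) -> \sum_(i < M) ptil i = 1 -> 0 < freq ptil j <= 1.
Proof.
move=> ptil_gt0 ptil_sum1.
have C_gt0 : (0 < C)%N by case: C j => [|C] [j]; rewrite ?muln0.
have ptil_le1 : ptil (group j) <= 1.
  rewrite -ptil_sum1 (bigD1 (group j)) //= lerDl.
  by apply: sumr_ge0 => i _; exact: ltW.
rewrite /freq divr_gt0 ?ltr0n //= ler_pdivrMr ?ltr0n // mul1r.
by apply: le_trans ptil_le1 _; rewrite ler1n.
Qed.

Theorem theorem4p1 (R : realType) :
  exists c1 c2 : R, 0 < c1 /\ 0 < c2 /\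
  forall (M C : nat) (ptil : 'I_M -> R) (E Et : 'M[R]_(M * C)),
    (1 < M * C)%N ->
    (forall i i' : 'I_M, (i < i')%N -> ptil i' < ptil i) ->
    (forall i : 'I_M, 0 < ptil i) ->
    \sum_(i < M) ptil i = 1 ->
    E^T *m E = 1%:M ->
    Et^T *m Et = 1%:M ->
    let alpha : R := 0 in
    let p := @freq R M C ptil in
    let L := totloss p alpha E Et in
    let W := gd L 1 0 in
    exists T0 : nat, forall t : nat, (T0 <= t)%N ->
      (forall j : 'I_(M * C),
          c1 / (p j * t%:R) <= subloss alpha E Et (W t) j <= c2 / (p j * t%:R)) /\
      c1 * (M * C)%:R / t%:R <= L (W t) <= c2 * (M * C)%:R / t%:R.
Proof.
have e2_gt0 := expR_gt0 (2 : R).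
exists (1 + 2 * expR 2)^-1, 4; split; first by rewrite invr_gt0; lra.
split=> // M C ptil E Et K_gt1 _ ptil_gt0 ptil_sum1 E_orth Et_orth alpha p L W.
have p_gt0 j : 0 < p j by case/andP: (freq_gt0_le1 j ptil_gt0 ptil_sum1).
have p_le1 j : p j <= 1 by case/andP: (freq_gt0_le1 j ptil_gt0 ptil_sum1).
exists (\max_(j < M * C) 2 * margin_warmup (M * C)%:R (p j))%N => t ht.
have subloss_bounds j := subloss_gd_bounds p j t K_gt1 E_orth Et_orth (p_gt0 j) (p_le1 j)
  (leq_trans (leq_bigmax j) ht).
split=> //.
have t_gt0 : (0 < t)%N.
  by apply: leq_trans ht; apply: leq_trans (leq_bigmax (Ordinal (ltnW K_gt1))).
have tR_neq0 : t%:R != 0 :> R by rewrite pnatr_eq0 -lt0n.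
have p_neq0 j : p j != 0 := lt0r_neq0 (p_gt0 j).
rewrite /L /totloss -(sum_mul_div_mul (1 + 2 * expR 2)^-1 p_neq0 tR_neq0).
rewrite -(sum_mul_div_mul 4 p_neq0 tR_neq0); apply/andP; split.
all: by apply: ler_sum => j _; rewrite ler_pM2l //; case/andP: (subloss_bounds j).
Qed.
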